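(* Let $\mathcal{D}$ be a distribution over probability distributions on $\mathbb{R}$ such that, with probability $1$, the distribution $X\sim\mathcal{D}$ has no atoms. For any $q,\beta>0$ with $q+\beta\le1$, we have $|\sigma_{q+\beta}^2-\sigma_q^2|\le5\beta$.
   Context: $M(\mathcal{D})$ is the mixture distribution: $\Pr_{M(\mathcal{D})}[A]=\mathbb{E}_{X\sim\mathcal{D}}[\Pr_X[A]]$. For $q'\in[0,1]$, $N_{q'}=\inf\{x:\Pr_{Y\sim M(\mathcal{D})}(Y\le x)\ge q'\}$ is the $q'$-th quantile of $M(\mathcal{D})$. For a distribution $X$ on $\mathbb{R}$, $q_X(x)=\Pr_{Y\sim X}(Y\le x)$. Define $\sigma_{q'}^2=\mathrm{Var}_{X\sim\mathcal{D}}[q_X(N_{q'})]$. *)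

From HB Require Import structures.
From mathcomp Require Import all_boot all_order all_algebra.
From mathcomp Require Import all_classical all_reals all_analysis.
From mathcomp Require Import giry.
Set Implicit Arguments. Unset Strict Implicit. Unset Printing Implicit Defensive.
Import Order.TTheory GRing.Theory Num.Theory.
Local Open Scope classical_set_scope.
Local Open Scope ring_scope.
Local Open Scope ereal_scope.

Section defs.
Variable R : realType.

(* A distribution D over (sub)probability distributions on R is a probability
   measure on the Giry space [giry R R]. *)

Definition mixture_cdf (D : probability (giry R R) R) (x : R) : \bar R :=
  \int[D]_X (X [set y : R | (y <= x)%R]).

(* N_{q'} = inf { x : Pr_{M(D)}(Y <= x) >= q' }, taken in the extended reals
   (inf of the empty set is +oo). *)
Definition Nq (D : probability (giry R R) R) (q' : R) : \bar R :=
  ereal_inf [set x%:E | x in [set x : R | q'%:E <= mixture_cdf D x]].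

Definition qX (X : giry R R) (t : \bar R) : \bar R :=
  X [set y : R | y%:E <= t].

Definition varD (D : probability (giry R R) R) (f : giry R R -> \bar R) : \bar R :=
  \int[D]_X ((f X - \int[D]_Y f Y) * (f X - \int[D]_Y f Y)).

Definition sigma2 (D : probability (giry R R) R) (q' : R) : \bar R :=
  varD D (fun X => qX X (Nq D q')).

End defs.

From HB Require Import structures.
From mathcomp Require Import all_boot all_order all_algebra.
From mathcomp Require Import all_classical all_reals all_analysis.
From mathcomp Require Import giry measurable_realfun.
From mathcomp Require Import lra.
Set Implicit Arguments. Unset Strict Implicit. Unset Printing Implicit Defensive.
Import Order.TTheory GRing.Theory Num.Theory.
Local Open Scope classical_set_scope.
Local Open Scope ring_scope.
Local Open Scope ereal_scope.

(* Put t1 = N_q <= t2 = N_(q+beta), f X = q_X(t1) and g X = q_X(t2), so that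
   0 <= f <= g <= 1.  The mixture cdf is right-continuous, hence
   E f = M(D)(-oo, t1] >= q; it is continuous from below, hence
   M(D)(-oo, t2) <= q + beta, and atomlessness gives
   E g = M(D)(-oo, t2] = M(D)(-oo, t2).  Thus E g - E f <= beta.  Pointwise,
   |(g - E g)^2 - (f - E f)^2| <= 2 (g - f) + 2 (E g - E f), and integrating
   gives |Var g - Var f| <= 4 (E g - E f) <= 4 beta. *)

Lemma sqr_centered_diff_le (R : realFieldType) (f g mf mg : R) :
  (0 <= f <= g)%R -> (g <= 1)%R -> (0 <= mf <= mg)%R -> (mg <= 1)%R ->
  (`|(g - mg) ^+ 2 - (f - mf) ^+ 2| <= 2 * (g - f) + 2 * (mg - mf))%R.
Proof.
move=> /andP[f0 fg] g1 /andP[mf0 mfg] mg1.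
rewrite ler_norml; apply/andP; split; nra.
Qed.

Section bounded_variance.
Context d (T : measurableType d) (R : realType) (P : probability T R).

Definition evariance (h : T -> \bar R) :=
  \int[P]_x ((h x - \int[P]_y h y) * (h x - \int[P]_y h y)).

Lemma bounded_integrable (f : T -> R) (K : R) : measurable_fun setT f ->
  (forall x, `|f x| <= K)%R -> P.-integrable setT (EFin \o f).
Proof.
move=> mf fK; apply: measurable_bounded_integrable => //.
  by rewrite -ge0_fin_numE ?fin_num_measure.
exists K; split; first exact: num_real.
by move=> M KM x _; exact: le_trans (fK x) (ltW KM).
Qed.

Lemma unit_valued_integrable (f : T -> R) : measurable_fun setT f ->
  (forall x, 0 <= f x <= 1)%R -> P.-integrable setT (EFin \o f).
Proof.
move=> mf f01; apply: (bounded_integrable (K := 1%R)) => // x.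
by have /andP[f0 f1] := f01 x; rewrite ger0_norm.
Qed.

Lemma unit_valued_mean (f : T -> R) : measurable_fun setT f ->
  (forall x, 0 <= f x <= 1)%R ->
  exists2 m : R, \int[P]_x (f x)%:E = m%:E & (0 <= m <= 1)%R.
Proof.
move=> mf f01; have fint := unit_valued_integrable mf f01.
have /fineK fm := integrable_fin_num measurableT fint.
exists (fine (\int[P]_x (f x)%:E)) => //.
rewrite -!lee_fin fm; apply/andP; split.
  by apply: integral_ge0 => x _; have /andP[] := f01 x; rewrite lee_fin.
apply: (@le_trans _ _ (\int[P]_x (cst 1 x))).
  apply: le_integral => //; first exact: finite_measure_integrable_cst.
  by move=> x _; have /andP[] := f01 x; rewrite lee_fin.
by rewrite integral_cst // mul1e; exact: probability_le1.
Qed.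

Lemma evariance_EFin (f : T -> R) (m : R) : \int[P]_x (f x)%:E = m%:E ->
  evariance (EFin \o f) = \int[P]_x ((f x - m) ^+ 2)%:E.
Proof.
move=> fm; rewrite /evariance /= fm.
by apply: eq_integral => x _; rewrite -EFinB -EFinM expr2.
Qed.

Lemma centered_sqr_integrable (f : T -> R) (m : R) : measurable_fun setT f ->
  (forall x, 0 <= f x <= 1)%R -> (0 <= m <= 1)%R ->
  P.-integrable setT (EFin \o (fun x => (f x - m) ^+ 2)%R).
Proof.
move=> mf f01 /andP[m0 m1]; apply: (bounded_integrable (K := 1%R)) => [|x].
  exact/measurable_funX/measurable_funB.
by have /andP[f0 f1] := f01 x; rewrite ger0_norm ?sqr_ge0 //; nra.
Qed.

Lemma integral_affine (h : T -> R) (a c : R) : P.-integrable setT (EFin \o h) ->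
  \int[P]_x (a * h x + c)%:E = a%:E * \int[P]_x (h x)%:E + c%:E.
Proof.
move=> hint; under eq_integral do rewrite EFinD EFinM.
rewrite integralD //; last 2 first.
- exact: integrableZl.
- exact: finite_measure_integrable_cst.
have PT : (P : {measure set T -> \bar R}) setT = 1 := probability_setT P.
by rewrite integralZl // integral_cst // PT mule1.
Qed.

Lemma evariance_ordered_dist_le (f g : T -> R) (b : R) :
  measurable_fun setT f -> measurable_fun setT g ->
  (forall x, 0 <= f x <= g x)%R -> (forall x, g x <= 1)%R ->
  \int[P]_x (g x)%:E <= \int[P]_x (f x)%:E + b%:E ->
  `|evariance (EFin \o g) - evariance (EFin \o f)| <= (4 * b)%:E.
Proof.
move=> mf mg fg g1 gfb.
have f01 x : (0 <= f x <= 1)%R.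
  by have /andP[f0 fgx] := fg x; rewrite f0 (le_trans fgx).
have g01 x : (0 <= g x <= 1)%R.
  by have /andP[f0 fgx] := fg x; rewrite g1 (le_trans f0 fgx).
have [mF fmF /andP[mF0 mF1]] := unit_valued_mean mf f01.
have [mG gmG /andP[mG0 mG1]] := unit_valued_mean mg g01.
have fint := unit_valued_integrable mf f01.
have gint := unit_valued_integrable mg g01.
have mFG : (mF <= mG)%R.
  rewrite -lee_fin -fmF -gmG; apply: le_integral => // x _.
  by have /andP[] := fg x; rewrite lee_fin.
have mGF : (mG - mF <= b)%R by move: gfb; rewrite fmF gmG -EFinD lee_fin; lra.
have gf_int : P.-integrable setT (EFin \o (g \- f)%R).
  apply: (bounded_integrable (K := 1%R)) => [|x]; first exact: measurable_funB.
  have /andP[f0 fgx] := fg x; have := g1 x.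
  by rewrite ger0_norm ?subr_ge0 //=; lra.
have gf_mean : \int[P]_x (g x - f x)%:E = (mG - mF)%:E.
  by under eq_integral do rewrite EFinB; rewrite integralB_EFin // fmF gmG.
have msq_diff : measurable_fun setT
    (fun x => (g x - mG) ^+ 2 - (f x - mF) ^+ 2)%R.
  by apply: measurable_funB; apply/measurable_funX/measurable_funB.
rewrite (evariance_EFin fmF) (evariance_EFin gmG).
rewrite -integralB_EFin //; first last.
- by apply: centered_sqr_integrable; rewrite ?mF0.
- by apply: centered_sqr_integrable; rewrite ?mG0.
under eq_integral do rewrite -EFinB.
apply: (le_trans (le_abse_integral _ _ _)) => //; first exact/measurable_EFinP.
apply: (@le_trans _ _ (\int[P]_x (2 * (g x - f x) + 2 * (mG - mF))%:E)).
  apply: ge0_le_integral => //.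
  - exact/measurableT_comp/measurable_EFinP.
  - apply/measurable_EFinP/measurable_funD => //.
    exact/measurable_funM/measurable_funB.
  - move=> x _; rewrite /= lee_fin.
    by apply: sqr_centered_diff_le; rewrite ?mF0 ?mFG.
by rewrite integral_affine // gf_mean -EFinM -EFinD lee_fin; lra.
Qed.

End bounded_variance.

Section rays.
Context (R : realType).

Definition below (t : \bar R) : set R := [set y | y%:E <= t].
Definition strictly_below (t : \bar R) : set R := [set y | y%:E < t].

Lemma measurable_below t : measurable (below t).
Proof.
by rewrite -[below t]setTI; apply: measurable_lee => //; exact: EFin_measurable.
Qed.

Lemma measurable_strictly_below t : measurable (strictly_below t).
Proof.
rewrite -[strictly_below t]setTI.
by apply: measurable_lte => //; exact: EFin_measurable.
Qed.

Lemma below_EFin r : below r%:E = `]-oo, r]%classic.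
Proof. by apply/seteqP; split => y; rewrite /below /= in_itv /= lee_fin. Qed.

Lemma below_le s t : s <= t -> below s `<=` below t.
Proof. by move=> st y /le_trans; apply. Qed.

Lemma le_measure_below (mu : {measure set R -> \bar R}) s t :
  s <= t -> mu (below s) <= mu (below t).
Proof.
move=> st; apply: le_measure; rewrite ?inE; last exact: below_le.
all: exact: measurable_below.
Qed.

Lemma bigcap_below t : t < +oo -> exists u : R^nat,
  [/\ forall n, t < (u n)%:E, nonincreasing_seq u &
      \bigcap_n below (u n)%:E = below t].
Proof.
case: t => [r||] // _.
- exists (fun n => r + n.+1%:R^-1)%R; split.
  + by move=> n; rewrite lte_fin ltrDl.
  + by move=> m n mn; rewrite lerD2l lef_pV2 ?posrE // ler_nat.
  + rewrite below_EFin (itvNycEbigcap false).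
    by apply: eq_bigcapr => n _; rewrite below_EFin.
- exists (fun n => - n%:R)%R; split.
  + by move=> n; rewrite ltNye.
  + by move=> m n mn; rewrite lerN2 ler_nat.
  + apply/seteqP; split => y //= yu; have := yu (Num.truncn (- y)).+1 I.
    by rewrite /below /= lee_fin lerNr leNgt truncnS_gt.
Qed.

Lemma bigcup_below t : -oo < t -> exists u : R^nat,
  [/\ forall n, (u n)%:E < t, nondecreasing_seq u &
      \bigcup_n below (u n)%:E = strictly_below t].
Proof.
case: t => [r||] // _.
- exists (fun n => r - n.+1%:R^-1)%R; split.
  + by move=> n; rewrite lte_fin ltrBlDr ltrDl.
  + by move=> m n mn; rewrite lerD2l lerN2 lef_pV2 ?posrE // ler_nat.
  + apply/seteqP; split => y /=.
      move=> [n _]; rewrite /below /strictly_below /= lte_fin lee_fin.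
      by move=> /le_lt_trans; apply; rewrite ltrBlDr ltrDl.
    rewrite /strictly_below /= lte_fin => /ltr_add_invr[n yn].
    by exists n => //; rewrite /below /= lee_fin lerBrDr ltW.
- exists (fun n => n%:R)%R; split.
  + by move=> n; rewrite ltry.
  + by move=> m n mn; rewrite ler_nat.
  + apply/seteqP; split => y /=; first by rewrite /strictly_below /= ltry.
    move=> _; exists (Num.truncn y).+1 => //.
    by rewrite /below /= lee_fin ltW // truncnS_gt.
Qed.

Lemma cvg_measure_below (mu : {finite_measure set R -> \bar R}) t : t < +oo ->
  exists2 u : R^nat, forall n, t < (u n)%:E &
    mu (below (u n)%:E) @[n --> \oo] --> mu (below t).
Proof.
move=> /bigcap_below[u [tu u_noninc capu]]; exists u => //.
rewrite -capu; apply: nonincreasing_cvg_mu.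
- by rewrite -ge0_fin_numE ?fin_num_measure //; exact: measurable_below.
- by move=> n; exact: measurable_below.
- by rewrite capu; exact: measurable_below.
- by move=> m n mn; apply/subsetPset/below_le; rewrite lee_fin u_noninc.
Qed.

Lemma cvg_measure_strictly_below (mu : {measure set R -> \bar R}) t : -oo < t ->
  exists2 u : R^nat, forall n, (u n)%:E < t &
    mu (below (u n)%:E) @[n --> \oo] --> mu (strictly_below t).
Proof.
move=> /bigcup_below[u [ut u_nondecr cupu]]; exists u => //.
rewrite -cupu; apply: nondecreasing_cvg_mu.
- by move=> n; exact: measurable_below.
- by rewrite cupu; exact: measurable_strictly_below.
- by move=> m n mn; apply/subsetPset/below_le; rewrite lee_fin u_nondecr.
Qed.

Lemma measure_below_atomless (mu : {measure set R -> \bar R}) t :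
  (forall x, mu [set x] = 0) -> mu (below t) = mu (strictly_below t).
Proof.
move=> atomless; case: t => [r||]; last 2 first.
- congr (mu _); apply/seteqP; split => y;
  by rewrite /below /strictly_below /= leey ltry.
- congr (mu _); apply/seteqP; split => y;
  by rewrite /below /strictly_below /= leeNy_eq ltNge leNye.
have -> : below r%:E = strictly_below r%:E `|` [set r].
  apply/seteqP; split => y; rewrite /below /strictly_below /= lee_fin lte_fin.
    by rewrite le_eqVlt => /predU1P[->|]; [right | left].
  by case=> [/ltW | ->].
rewrite measureU //= ?atomless ?adde0 //.
  exact: measurable_strictly_below.
by apply/seteqP; split => y // [+ yr]; rewrite yr /strictly_below /= ltxx.
Qed.

End rays.

Section mixture_quantile.
Context (R : realType) (D : probability (giry R R) R).

Definition mixture : giry R R := giry_join (D : giry (giry R R) R).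

Lemma mixture_cdfE x : mixture_cdf D x = mixture (below x%:E).
Proof. by []. Qed.

Lemma le_Nq q1 q2 : (q1 <= q2)%R -> Nq D q1 <= Nq D q2.
Proof.
move=> q12; apply: le_ereal_inf => _ [x q2x <-]; exists x => //=.
by apply: le_trans q2x; rewrite lee_fin.
Qed.

Lemma Nq_le_mixture_below q : Nq D q < +oo -> q%:E <= mixture (below (Nq D q)).
Proof.
move=> /(cvg_measure_below mixture)[u Nu]; apply: cvge_ge; apply: nearW => n.
have [_ [x qx <-] xu] := ereal_inf_lt (Nu n).
apply: le_trans qx _; rewrite mixture_cdfE.
by apply: le_measure_below; rewrite ltW.
Qed.

Lemma mixture_strictly_below_Nq_le q : -oo < Nq D q ->
  mixture (strictly_below (Nq D q)) <= q%:E.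
Proof.
move=> /(cvg_measure_strictly_below mixture)[u uN].
apply: cvge_le; apply: nearW => n.
rewrite leNgt; apply/negP => /ltW qu.
suff : Nq D q <= (u n)%:E by rewrite leNgt uN.
by apply: ereal_inf_lbound; exists (u n).
Qed.

Lemma Nq_gtNy q : (0 < q)%R -> -oo < Nq D q.
Proof.
move=> q0; rewrite ltNye; apply/eqP => Nqy.
have := @Nq_le_mixture_below q; rewrite Nqy => /(_ (ltNye _)).
rewrite (_ : below -oo = set0) ?measure0 ?lee_fin ?leNgt ?q0 //.
by apply/seteqP; split => y //; rewrite /below /= leeNy_eq.
Qed.

Lemma mixture_below_atomless :
  {ae D, forall X : giry R R, forall x, X [set x] = 0} ->
  forall t, mixture (below t) = mixture (strictly_below t).
Proof.
move=> atomless t; apply: ae_eq_integral => //.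
- exact: measurable_giry_ev (measurable_below t).
- exact: measurable_giry_ev (measurable_strictly_below t).
- by apply: filterS atomless => X Xatomless _; exact: measure_below_atomless.
Qed.

Lemma mixture_below_NqD_le q beta :
  {ae D, forall X : giry R R, forall x, X [set x] = 0} ->
  (0 < q)%R -> (0 <= beta)%R ->
  mixture (below (Nq D (q + beta))) <= mixture (below (Nq D q)) + beta%:E.
Proof.
move=> atomless q0 beta0.
have Nq_le : Nq D q <= Nq D (q + beta) by apply: le_Nq; rewrite lerDl.
have [Nqy|] := eqVneq (Nq D q) +oo.
  have -> : Nq D (q + beta) = +oo by apply/eqP; rewrite -leye_eq -Nqy.
  by rewrite Nqy leeDl // lee_fin.
rewrite -ltey => Nqlty.
rewrite mixture_below_atomless //.
apply: le_trans (mixture_strictly_below_Nq_le _) _.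
  exact: lt_le_trans (Nq_gtNy q0) Nq_le.
by rewrite EFinD leeD2r //; exact: Nq_le_mixture_below.
Qed.

End mixture_quantile.

Section qX_values.
Context (R : realType).

Lemma qX_fin_num (X : giry R R) t : qX X t \is a fin_num.
Proof. by rewrite fin_num_measure //; exact: measurable_below. Qed.

Lemma fine_qX_unit (X : giry R R) t : (0 <= fine (qX X t) <= 1)%R.
Proof.
rewrite -!lee_fin fineK ?qX_fin_num // measure_ge0 /=.
apply: (@le_trans _ _ (X setT)); last exact: sprobability_setT.
by rewrite /qX; apply: le_measure; rewrite ?inE //; exact: measurable_below.
Qed.

Lemma measurable_fine_qX t :
  measurable_fun setT (fun X : giry R R => fine (qX X t)).
Proof.
apply/measurable_EFinP; rewrite (_ : _ \o _ = fun X : giry R R => X (below t)).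
  exact: measurable_giry_ev (measurable_below t).
by apply/funext => X /=; rewrite fineK ?qX_fin_num.
Qed.

Lemma integral_fine_qX (D : probability (giry R R) R) t :
  \int[D]_X (fine (qX X t))%:E = mixture D (below t).
Proof. by apply: eq_integral => X _; rewrite fineK ?qX_fin_num. Qed.

Lemma sigma2E (D : probability (giry R R) R) q :
  sigma2 D q = evariance D (EFin \o (fun X => fine (qX X (Nq D q)))).
Proof.
rewrite /sigma2.
suff -> : (fun X => qX X (Nq D q)) = EFin \o (fun X => fine (qX X (Nq D q))).
  by [].
by apply/funext => X /=; rewrite fineK ?qX_fin_num.
Qed.

End qX_values.

Theorem lemma4p4 (R : realType) (D : probability (giry R R) R)
  (hD : {ae D, forall X : giry R R,
          X [set: R] = 1 /\ forall x : R, X [set x] = 0})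
  (q beta : R) (hq : (0 < q)%R) (hbeta : (0 < beta)%R)
  (hqb : (q + beta <= 1)%R) :
  `| sigma2 D (q + beta) - sigma2 D q | <= (5 * beta)%:E.
Proof.
have atomless : {ae D, forall X : giry R R, forall x, X [set x] = 0}.
  by apply: filterS hD => X [].
rewrite !sigma2E; apply: (@le_trans _ _ (4 * beta)%:E).
  2: by rewrite lee_fin; lra.
apply: evariance_ordered_dist_le.
- exact: measurable_fine_qX.
- exact: measurable_fine_qX.
- move=> X; have /andP[-> _] := fine_qX_unit X (Nq D q).
  rewrite fine_le ?qX_fin_num //; apply: le_measure_below.
  by apply: le_Nq; rewrite lerDl ltW.
- by move=> X; have /andP[_ ->] := fine_qX_unit X (Nq D (q + beta)).
- by rewrite !integral_fine_qX; apply: mixture_below_NqD_le; rewrite // ltW.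
Qed.
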